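(* For every $\beta>0$, the origin is the unique globally asymptotically stable equilibrium of the ODE $\dot x=h(x)$ on $\mathbb R^n\times\mathbb R^n$, where $$h(x_1,x_2)=\begin{bmatrix}-Dx_1+\gamma DPM(x_2)\\ \beta Dx_1-\beta Dx_2\end{bmatrix}.$$
   Context: Finite MDP with states $\mathcal S$, actions $\mathcal A$, kernel $P$, discount $\gamma\in[0,1)$; $n=|\mathcal S||\mathcal A|$. $D$ is the diagonal matrix of a probability distribution $d$ on $\mathcal S\times\mathcal A$ with $d(s,a)>0$ for all $(s,a)$; $P$ is the $n\times|\mathcal S|$ matrix with row $(s,a)$ equal to $P(\cdot\mid s,a)$; $M(Q)(s)=\max_aQ(s,a)$. Globally asymptotically stable means Lyapunov stable and every solution converges to it. *)

From HB Require Import structures.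
From mathcomp Require Import all_boot all_order all_algebra.
From mathcomp Require Import all_classical all_reals all_analysis.
Set Implicit Arguments. Unset Strict Implicit. Unset Printing Implicit Defensive.
Import Order.TTheory GRing.Theory Num.Theory.
Import numFieldNormedType.Exports.
Local Open Scope classical_set_scope.
Local Open Scope ring_scope.

Section MDP.
Variables (R : realType) (S A : finType).

(* M(Q)(s) = max_a Q(s,a)  (0 if the action set is empty, a vacuous case) *)
Definition Mmax (Q : S * A -> R) (s : S) : R :=
  match [pick a : A] with
  | Some a0 => \big[Num.max/Q (s, a0)]_(a : A) Q (s, a)
  | None => 0
  end.

Definition Pmul (P : S * A -> S -> R) (v : S -> R) (i : S * A) : R :=
  \sum_(s' : S) P i s' * v s'.

Definition h1 (P : S * A -> S -> R) (d : S * A -> R) (gamma : R)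
    (x1 x2 : S * A -> R) (i : S * A) : R :=
  - (d i * x1 i) + gamma * (d i * Pmul P (Mmax x2) i).

Definition h2 (d : S * A -> R) (beta : R)
    (x1 x2 : S * A -> R) (i : S * A) : R :=
  beta * (d i * x1 i) - beta * (d i * x2 i).

Definition nrm2 (x1 x2 : S * A -> R) : R :=
  \big[Num.max/0]_(i : S * A) Num.max `|x1 i| `|x2 i|.

Definition is_solution (P : S * A -> S -> R) (d : S * A -> R) (gamma beta : R)
    (x1 x2 : R -> S * A -> R) : Prop :=
  (forall i, {within `[0, +oo[, continuous (fun t => x1 t i)}) /\
  (forall i, {within `[0, +oo[, continuous (fun t => x2 t i)}) /\
  (forall t : R, 0 < t -> forall i,
      is_derive t 1 (fun u => x1 u i) (h1 P d gamma (x1 t) (x2 t) i) /\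
      is_derive t 1 (fun u => x2 u i) (h2 d beta (x1 t) (x2 t) i)).

Definition is_equilibrium P d gamma beta (z1 z2 : S * A -> R) : Prop :=
  (forall i, h1 P d gamma z1 z2 i = 0) /\ (forall i, h2 d beta z1 z2 i = 0).

Definition origin_GAS P d gamma beta : Prop :=
  (forall eps : R, 0 < eps -> exists2 delta : R, 0 < delta &
     forall x1 x2, is_solution P d gamma beta x1 x2 ->
       nrm2 (x1 0) (x2 0) < delta ->
       forall t : R, 0 <= t -> nrm2 (x1 t) (x2 t) < eps) /\
  (forall x1 x2, is_solution P d gamma beta x1 x2 ->
     (fun t => nrm2 (x1 t) (x2 t)) @ +oo --> (0 : R)).

End MDP.

(* Fix c = (1 + gamma) / 2 and a rate k > 0 small compared with min d, beta, c - gamma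
   and 1 - c.  For every K > 0 the shrinking box |x1_i| < c K e^{-kt}, |x2_i| < K e^{-kt}
   is forward invariant: on an x1-face the field points strictly inward because P M is
   nonexpansive in the sup norm and gamma < c, on an x2-face because x1 is c times smaller
   and c < 1; so at a first exit time the trajectory would already have been outside just
   before.  Fitting K to the initial state gives ||x(t)|| <= ||x(0)|| e^{-kt} / c, whence
   stability and attractivity.  The same sup-norm estimate forces an equilibrium to vanish:
   it has x2 = x1 and ||x1|| <= gamma ||x1||. *)

From HB Require Import structures.
From mathcomp Require Import all_boot all_order all_algebra.
From mathcomp Require Import all_classical all_reals all_analysis.
From mathcomp Require Import ring lra.
Set Implicit Arguments.
Unset Strict Implicit.
Unset Printing Implicit Defensive.

Import Order.TTheory GRing.Theory Num.Theory.
Import numFieldNormedType.Exports.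
Local Open Scope classical_set_scope.
Local Open Scope ring_scope.

Section RealFacts.
Variable R : realType.
Implicit Types (f : R -> R) (t u z : R).

Lemma within_continuous_gt_near f t z : {within `[0, +oo[, continuous f} ->
  0 <= t -> z < f t -> \forall s \near t, 0 <= s -> z < f s.
Proof.
move=> cf t0 zf; have := (subspace_continuousP _ _).1 cf t.
rewrite /= in_itv /= andbT => /(_ t0) /cvgr_gt /(_ _ zf).
rewrite near_withinE; apply: filterS => s fs s0; apply: fs.
by rewrite /= in_itv /= andbT.
Qed.

Lemma within_continuous_lt_near f t z : {within `[0, +oo[, continuous f} ->
  0 <= t -> f t < z -> \forall s \near t, 0 <= s -> f s < z.
Proof.
move=> cf t0 fz; have := (subspace_continuousP _ _).1 cf t.
rewrite /= in_itv /= andbT => /(_ t0) /cvgr_lt /(_ _ fz).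
rewrite near_withinE; apply: filterS => s fs s0; apply: fs.
by rewrite /= in_itv /= andbT.
Qed.

Lemma left_nonneg_point t e : 0 < t -> 0 < e ->
  exists s, 0 <= s < t /\ t - e < s < t.
Proof.
move=> t0 e0; exists (t - Num.min t e / 2).
have me : 0 < Num.min t e by rewrite lt_min t0.
have [mt mle] : Num.min t e <= t /\ Num.min t e <= e by rewrite !ge_min !lexx orbT.
by split; apply/andP; split; lra.
Qed.

Lemma within_continuous_ge0_left f t : {within `[0, +oo[, continuous f} ->
  0 < t -> (forall s, 0 <= s < t -> 0 < f s) -> 0 <= f t.
Proof.
move=> cf t0 fpos; rewrite leNgt; apply/negP => ft.
have /nbhs_ballP[e /= e0 He] := within_continuous_lt_near cf (ltW t0) ft.
have [s [s0 /andP[ts st]]] := left_nonneg_point t0 e0.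
have : `|t - s| < e by rewrite ger0_norm; lra.
move=> /He /(_ (proj1 (andP s0))) fs; have := fpos s s0; lra.
Qed.

Section FirstExit.
Variables (I : finType) (g : I -> R -> R).
Hypotheses (g_cont : forall k, {within `[0, +oo[, continuous (g k)})
  (g0_gt0 : forall k, 0 < g k 0).

Lemma first_exit_time t0 k0 : 0 <= t0 -> g k0 t0 <= 0 ->
  exists T, [/\ 0 < T, forall k s, 0 <= s < T -> 0 < g k s,
    forall k, 0 <= g k T & exists j, g j T = 0].
Proof.
move=> t00 gk0.
pose E := [set t | 0 <= t /\ exists k, g k t <= 0].
have En : nonempty E by exists t0; split => //; exists k0.
have El : lbound E 0 by move=> y [].
pose T := inf E.
have T0 : 0 <= T := lb_le_inf En El.
have TleE y : E y -> T <= y by apply: ge_inf; exists 0.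
have below k s : 0 <= s < T -> 0 < g k s.
  case/andP=> s0 sT; rewrite ltNge; apply/negP => gks.
  by have := TleE s (conj s0 (ex_intro _ k gks)); rewrite leNgt sT.
have [k gkT] : exists k, g k T <= 0.
  have [//|noneg] := pselect (exists k, g k T <= 0); exfalso.
  have pos k : 0 < g k T by rewrite ltNge; apply/negP => gk; apply: noneg; exists k.
  have /nbhs_ballP[e /= e0 He] : \forall s \near T, forall k, 0 <= s -> 0 < g k s.
    apply: (@filter_forall R I (fun k s => 0 <= s -> 0 < g k s) _ (nbhs_filter T)) => k.
    exact: within_continuous_gt_near.
  suff : T + e / 2 <= T by lra.
  apply: lb_le_inf => // y [y0 [k' gky]]; rewrite leNgt; apply/negP => yl.
  have Ty := TleE y (conj y0 (ex_intro _ k' gky)).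
  have /He /(_ k' y0) : ball T e y by rewrite /ball /= distrC ger0_norm; lra.
  lra.
have T_gt0 : 0 < T.
  rewrite lt_neqAle T0 andbT; apply/eqP => T00.
  by have := g0_gt0 k; rewrite T00; lra.
have T_ge0 k' : 0 <= g k' T by apply: within_continuous_ge0_left => // s /below.
by exists T; split => //; exists k; apply/eqP; rewrite eq_le gkT T_ge0.
Qed.

Lemma barrier_positive :
  (forall t, 0 < t -> (forall k, 0 <= g k t) -> forall j, g j t = 0 ->
     exists2 e, 0 < e & forall s, t - e < s < t -> g j s < 0) ->
  forall t k, 0 <= t -> 0 < g k t.
Proof.
move=> cross t k t0; rewrite ltNge; apply/negP => gkt.
have [T [T0 below T_ge0 [j gjT]]] := first_exit_time t0 gkt.
have [e e0 He] := cross T T0 T_ge0 j gjT.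
have [s [s0 sT]] := left_nonneg_point T0 e0.
by have := below j s s0; have := He s sT; lra.
Qed.
End FirstExit.

Lemma is_derive_gt0_left_lt0 f t l : is_derive t 1 f l -> 0 < l -> f t <= 0 ->
  exists2 e, 0 < e & forall s, t - e < s < t -> f s < 0.
Proof.
move=> [df dfE] l0 ft.
have : (fun h : R => h^-1 *: ((f \o shift t) (h *: 1) - f t)) @ 0^' --> l.
  by rewrite -dfE; exact: df.
move=> /cvgr_gt /(_ (l / 2) ltac:(lra)); rewrite near_withinE => -[e /= e0 He].
exists e => // s /andP[s1 s2].
have : ball 0 e (s - t) by rewrite /ball /= sub0r normrN ltr0_norm; lra.
move=> /He /(_ ltac:(apply/eqP; lra)) /=.
rewrite /shift /= -[X in f (X + t)]/((s - t) * 1) mulr1 subrK.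
rewrite -[X in _ < X]/((s - t)^-1 * (f s - f t)) => Hq.
have : 0 < - (s - t)^-1 * (f t - f s) by rewrite mulNr -mulrN opprB; lra.
rewrite pmulr_rgt0; last by rewrite oppr_gt0 invr_lt0; lra.
lra.
Qed.

Lemma is_derive_expR_decay B k u :
  is_derive u 1 (fun s => B * expR (- (k * s))) (- k * (B * expR (- (k * u)))).
Proof.
have dB := is_deriveZ B (is_derive1_comp (is_derive_expR _)
  (is_deriveN (is_deriveZ k (is_derive_id u (1 : R))))).
suff -> : - k * (B * expR (- (k * u))) = B *: (expR ((- (k \*: id)) u) * - k%:A) by [].
by rewrite /GRing.scale /= mulr1 [_ * - k]mulrC mulrCA.
Qed.

Lemma continuous_expR_decay B k : continuous (fun s : R => B * expR (- (k * s))).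
Proof.
move=> u; apply: differentiable_continuous; apply/derivable1_diffP.
by case: (is_derive_expR_decay B k u).
Qed.

Lemma within_continuous_subr_norm (b f : R -> R) : continuous b ->
  {within `[0, +oo[, continuous f} -> {within `[0, +oo[, continuous (fun u => b u - `|f u|)}.
Proof.
move=> cb cf; apply/subspace_continuousP => s s0.
apply: cvgB; first exact: cvg_within_filter (cb s).
by apply: cvg_norm; exact: (subspace_continuousP _ _).1 cf s s0.
Qed.

(* [f u * l < - k * f u ^+ 2]: f^2 decreases faster than the squared envelope at u. *)
Lemma touch_envelope_from_outside f B k u l : 0 < B -> is_derive u 1 f l ->
  `|f u| = B * expR (- (k * u)) -> f u * l < - k * f u ^+ 2 ->
  exists2 e, 0 < e & forall s, u - e < s < u -> B * expR (- (k * s)) - `|f s| < 0.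
Proof.
move=> B0; wlog fu0 : f l / 0 <= f u => [wlog_pos df fu flow|].
  have [/wlog_pos|fu_lt0] := leP 0 (f u); first exact.
  have [|||e e0 He] := wlog_pos (- f) (- l) _ (is_deriveN df).
  - by rewrite /= oppr_ge0 ltW.
  - by rewrite /= normrN.
  - by rewrite /= mulrNN sqrrN.
  by exists e => // s /He; rewrite /= normrN.
move=> df fu flow.
have Bu0 : 0 < B * expR (- (k * u)) by rewrite mulr_gt0 ?expR_gt0.
have fuE : f u = B * expR (- (k * u)) by rewrite -fu ger0_norm.
have l_lt : l < - k * (B * expR (- (k * u))).
  by rewrite -(ltr_pM2l (_ : 0 < f u)) ?fuE // mulrCA -expr2 -fuE.
have [||e e0 He] := @is_derive_gt0_left_lt0 (fun s => B * expR (- (k * s)) - f s) u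
  _ (is_deriveB (is_derive_expR_decay B k u) df).
- by rewrite subr_gt0.
- by rewrite /= fuE subrr.
by exists e => // s /He; have := ler_norm (f s); lra.
Qed.
End RealFacts.

Section MDPFacts.
Variables (R : realType) (S A : finType).
Implicit Types (Q x y : S * A -> R) (P : S * A -> S -> R).

Lemma norm_Mmax_le Q m s : 0 <= m -> (forall i, `|Q i| <= m) -> `|Mmax Q s| <= m.
Proof.
move=> m0 Qm; rewrite /Mmax; case: pickP => [a0 _|_]; last by rewrite normr0.
by elim/big_ind: _ => // x y xm ym; rewrite maxEle; case: ifP.
Qed.

Lemma Mmax0 s : Mmax (fun _ : S * A => 0 : R) s = 0.
Proof. by apply/eqP; rewrite -normr_le0 norm_Mmax_le // => i; rewrite normr0. Qed.

Lemma norm_Pmul_le P (v : S -> R) m i :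
  (forall i s', 0 <= P i s') -> (forall i, \sum_(s' : S) P i s' = 1) ->
  (forall s, `|v s| <= m) -> `|Pmul P v i| <= m.
Proof.
move=> P_ge0 P_sum1 vm; apply: le_trans (ler_norm_sum _ _ _) _.
apply: le_trans (_ : \sum_(s' : S) P i s' * m <= m); last first.
  by rewrite -mulr_suml P_sum1 mul1r.
by apply: ler_sum => s' _; rewrite normrM ger0_norm // ler_wpM2l.
Qed.

Lemma nrm2_ge0 x y : 0 <= nrm2 x y.
Proof. by rewrite /nrm2; elim/big_ind: _ => // a b a0 b0; rewrite le_max a0. Qed.

Lemma norm_le_nrm2l x y i : `|x i| <= nrm2 x y.
Proof. by apply: le_trans (le_bigmax _ _ i); rewrite le_max lexx. Qed.

Lemma norm_le_nrm2r x y i : `|y i| <= nrm2 x y.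
Proof. by apply: le_trans (le_bigmax _ _ i); rewrite le_max lexx orbT. Qed.

Lemma nrm2_le x y m : 0 <= m ->
  (forall i, `|x i| <= m) -> (forall i, `|y i| <= m) -> nrm2 x y <= m.
Proof. by move=> m0 xm ym; apply: bigmax_le => // i _; rewrite ge_max xm ym. Qed.

Lemma origin_is_equilibrium P d gamma beta :
  is_equilibrium P d gamma beta (fun _ => 0) (fun _ => 0).
Proof.
have Pmul0 i : Pmul P (Mmax (fun _ : S * A => 0)) i = 0.
  by rewrite /Pmul big1 // => s' _; rewrite Mmax0 mulr0.
by split => i; rewrite /h1 /h2 ?Pmul0 !mulr0 ?subrr // oppr0 add0r.
Qed.

Lemma equilibrium_eq0 P d gamma beta z1 z2 :
  (forall i s', 0 <= P i s') -> (forall i, \sum_(s' : S) P i s' = 1) ->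
  (forall i, d i != 0) -> 0 <= gamma -> gamma < 1 -> beta != 0 ->
  is_equilibrium P d gamma beta z1 z2 -> z1 = (fun _ => 0) /\ z2 = (fun _ => 0).
Proof.
move=> P_ge0 P_sum1 d_neq0 g0 g1 b_neq0 [h1_eq0 h2_eq0].
have z12 i : z1 i = z2 i.
  move/eqP: (h2_eq0 i); rewrite /h2 subr_eq0 => /eqP.
  by move/(mulfI b_neq0)/(mulfI (d_neq0 i)).
set m := nrm2 z1 z2.
have z1_le i : `|z1 i| <= gamma * m.
  move/eqP: (h1_eq0 i); rewrite /h1 addrC subr_eq0 => /eqP.
  rewrite mulrCA => /(mulfI (d_neq0 i)) <-.
  rewrite normrM ger0_norm // ler_wpM2l // norm_Pmul_le // => s.
  by apply: norm_Mmax_le => [|j]; [exact: nrm2_ge0 | exact: norm_le_nrm2r].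
have m_le : m <= gamma * m.
  by apply: nrm2_le => [|i|i]; rewrite ?mulr_ge0 ?nrm2_ge0 // -z12.
have m0 : m <= 0 by have := nrm2_ge0 z1 z2; nra.
by split; apply/funext => i; apply/eqP; rewrite -normr_le0;
  [exact: le_trans (norm_le_nrm2l _ _ i) m0 | exact: le_trans (norm_le_nrm2r _ _ i) m0].
Qed.
End MDPFacts.

Section Decay.
Variables (R : realType) (S A : finType).
Variables (P : S * A -> S -> R) (d : S * A -> R) (gamma beta c k : R).
Hypotheses (P_ge0 : forall i s', 0 <= P i s')
  (P_sum1 : forall i, \sum_(s' : S) P i s' = 1)
  (d_gt0 : forall i, 0 < d i) (gamma_ge0 : 0 <= gamma) (beta_ge0 : 0 <= beta)
  (c_gt0 : 0 < c) (c_le1 : c <= 1)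
  (k_h1 : forall i, c * k < d i * (c - gamma))
  (k_h2 : forall i, k < beta * (d i * (1 - c))).

Lemma h1_inward (x1 x2 : S * A -> R) i b : 0 < b ->
  `|x1 i| = c * b -> (forall j, `|x2 j| <= b) ->
  x1 i * h1 P d gamma x1 x2 i < - k * x1 i ^+ 2.
Proof.
move=> b0 x1i x2b; rewrite /h1; set p := Pmul _ _ i.
have pb : `|p| <= b by apply: norm_Pmul_le => // s; apply: norm_Mmax_le => //; exact: ltW.
have x1p : x1 i * p <= c * b * b.
  apply: le_trans (ler_norm _) _; rewrite normrM x1i.
  by apply: ler_wpM2l => //; rewrite mulr_ge0 ?ltW.
have x1sq : x1 i ^+ 2 = (c * b) ^+ 2 by rewrite -x1i real_normK ?num_real.
have dxp : gamma * (d i * (x1 i * p)) <= gamma * (d i * (c * b * b)).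
  by apply: ler_wpM2l => //; apply: ler_wpM2l x1p; exact: ltW.
have : c * b * b * (c * k - d i * (c - gamma)) < 0.
  by rewrite pmulr_rlt0 ?subr_lt0 // !mulr_gt0.
have -> : x1 i * (- (d i * x1 i) + gamma * (d i * p)) =
  - (d i * x1 i ^+ 2) + gamma * (d i * (x1 i * p)) by ring.
rewrite x1sq; nra.
Qed.

Lemma h2_inward (x1 x2 : S * A -> R) i b : 0 < b ->
  `|x2 i| = b -> `|x1 i| <= c * b ->
  x2 i * h2 d beta x1 x2 i < - k * x2 i ^+ 2.
Proof.
move=> b0 x2i x1i; rewrite /h2.
have x12 : x2 i * x1 i <= b * (c * b).
  apply: le_trans (ler_norm _) _; rewrite normrM x2i.
  by apply: ler_wpM2l x1i; exact: ltW.
have x2sq : x2 i ^+ 2 = b ^+ 2 by rewrite -x2i real_normK ?num_real.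
have bdx : beta * (d i * (x2 i * x1 i)) <= beta * (d i * (b * (c * b))).
  by apply: ler_wpM2l => //; apply: ler_wpM2l x12; exact: ltW.
have : b * b * (k - beta * (d i * (1 - c))) < 0.
  by rewrite pmulr_rlt0 ?subr_lt0 // !mulr_gt0.
have -> : x2 i * (beta * (d i * x1 i) - beta * (d i * x2 i)) =
  beta * (d i * (x2 i * x1 i)) - beta * (d i * x2 i ^+ 2) by ring.
rewrite x2sq; nra.
Qed.

Lemma solution_in_box x1 x2 K : is_solution P d gamma beta x1 x2 -> 0 < K ->
  (forall i, `|x1 0 i| < c * K) -> (forall i, `|x2 0 i| < K) ->
  forall t, 0 <= t ->
    (forall i, `|x1 t i| < c * K * expR (- (k * t))) /\
    (forall i, `|x2 t i| < K * expR (- (k * t))).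
Proof.
move=> [x1_cont [x2_cont x_der]] K0 x1_0 x2_0.
pose g (j : (S * A) + (S * A)) u := match j with
  | inl i => c * K * expR (- (k * u)) - `|x1 u i|
  | inr i => K * expR (- (k * u)) - `|x2 u i| end.
have g_cont j : {within `[0, +oo[, continuous (g j)}.
  by case: j => i; apply: within_continuous_subr_norm;
    [exact: continuous_expR_decay | exact: x1_cont | exact: continuous_expR_decay | exact: x2_cont].
have g0 j : 0 < g j 0.
  by case: j => i /=; rewrite mulr0 oppr0 expR0 mulr1 subr_gt0.
have cross u : 0 < u -> (forall j, 0 <= g j u) -> forall j, g j u = 0 ->
    exists2 e, 0 < e & forall s, u - e < s < u -> g j s < 0.
  move=> u0 g_ge0 [] i /= /eqP; rewrite subr_eq0 => /eqP xi.
  - have x2b j : `|x2 u j| <= K * expR (- (k * u)) by have := g_ge0 (inr j); rewrite /=; lra.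
    apply: (touch_envelope_from_outside (mulr_gt0 c_gt0 K0) (proj1 (x_der u u0 i)) (esym xi)).
    by apply: (h1_inward (mulr_gt0 K0 (expR_gt0 _)) _ x2b); rewrite -xi mulrA.
  - have x1b : `|x1 u i| <= c * (K * expR (- (k * u))).
      by have := g_ge0 (inl i); rewrite /= mulrA; lra.
    apply: (touch_envelope_from_outside K0 (proj2 (x_der u u0 i)) (esym xi)).
    exact: (h2_inward (mulr_gt0 K0 (expR_gt0 _)) (esym xi) x1b).
move=> t t0; have g_gt0 := barrier_positive g_cont g0 cross.
split=> i; [have := g_gt0 t (inl i) t0 | have := g_gt0 t (inr i) t0]; rewrite /=; lra.
Qed.

Lemma solution_norm_decay x1 x2 : is_solution P d gamma beta x1 x2 ->
  forall t, 0 <= t ->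
  nrm2 (x1 t) (x2 t) <= nrm2 (x1 0) (x2 0) / c * expR (- (k * t)).
Proof.
move=> sol t t0; set m := nrm2 (x1 0) _; set E := expR _.
have E0 : 0 < E := expR_gt0 _.
have m0 : 0 <= m := nrm2_ge0 _ _.
have m_le : m <= m / c by rewrite ler_pdivlMr // ler_piMr.
apply/ler_addgt0Pr => eta eta0.
pose K := m / c + eta / E.
have etaE : 0 < eta / E by rewrite divr_gt0.
have cK : c * K = m + c * (eta / E) by rewrite mulrDr mulrCA mulfV ?gt_eqF // mulr1.
have cetaE : 0 < c * (eta / E) by rewrite mulr_gt0.
have K0 : 0 < K by rewrite /K; lra.
have x1_0 i : `|x1 0 i| < c * K.
  by have := norm_le_nrm2l (x1 0) (x2 0) i; rewrite cK -/m; lra.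
have x2_0 i : `|x2 0 i| < K.
  by have := norm_le_nrm2r (x1 0) (x2 0) i; rewrite /K -/m; lra.
have [x1_box x2_box] := solution_in_box sol K0 x1_0 x2_0 t0.
have KE : K * E = m / c * E + eta by rewrite mulrDl divfK ?gt_eqF.
rewrite -KE; apply: nrm2_le => [|i|i].
- by rewrite mulr_ge0 ?ltW //; lra.
- apply: ltW (lt_le_trans (x1_box i) _).
  by rewrite -mulrA ler_piMl // mulr_ge0 ?ltW //; lra.
- exact: ltW (x2_box i).
Qed.
End Decay.

Lemma finite_pos_lbound (R : realType) (I : finType) (d : I -> R) :
  (forall i, 0 < d i) -> exists2 m, 0 < m & forall i, m <= d i.
Proof.
move=> d_gt0; exists (\big[Num.min/1]_i d i); last by move=> i; apply: bigmin_le.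
by elim/big_ind: _ => // x y x0 y0; rewrite lt_min x0.
Qed.

Lemma decay_rate_exists (R : realType) (I : finType) (d : I -> R) gamma beta c :
  (forall i, 0 < d i) -> 0 < beta -> gamma < c -> c < 1 ->
  exists2 k, 0 < k &
    (forall i, c * k < d i * (c - gamma)) /\ (forall i, k < beta * (d i * (1 - c))).
Proof.
move=> d_gt0 b0 gc c1; have [m m0 m_le] := finite_pos_lbound d_gt0.
pose r := Num.min (c - gamma) (beta * (1 - c)).
have r0 : 0 < r by rewrite lt_min subr_gt0 gc mulr_gt0 // subr_gt0.
have [r1 r2] : r <= c - gamma /\ r <= beta * (1 - c).
  by split; rewrite /r ge_min lexx ?orbT.
exists (m * r / 2); first by rewrite divr_gt0 ?mulr_gt0.
have mr0 : 0 < m * r by rewrite mulr_gt0.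
split=> i.
- have := ler_pM (ltW m0) (ltW r0) (m_le i) r1.
  have : c * (m * r) < m * r by rewrite gtr_pMl //; lra.
  lra.
- have := ler_pM (ltW m0) (ltW r0) (m_le i) r2.
  rewrite mulrCA; lra.
Qed.

Lemma origin_GAS_of_exp_decay (R : realType) (S A : finType) (P : S * A -> S -> R)
    (d : S * A -> R) (gamma beta c k : R) : 0 < c -> 0 < k ->
  (forall x1 x2, is_solution P d gamma beta x1 x2 -> forall t, 0 <= t ->
     nrm2 (x1 t) (x2 t) <= nrm2 (x1 0) (x2 0) / c * expR (- (k * t))) ->
  origin_GAS P d gamma beta.
Proof.
move=> c0 k0 decay; split=> [eps eps0|x1 x2 sol].
  exists (c * eps) => [|x1 x2 sol x0_lt t t0]; first by rewrite mulr_gt0.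
  apply: le_lt_trans (decay _ _ sol t t0) _.
  apply: le_lt_trans (_ : _ <= nrm2 (x1 0) (x2 0) / c) _; last by rewrite ltr_pdivrMr // mulrC.
  apply: ler_piMr; first by rewrite divr_ge0 ?nrm2_ge0 ?ltW.
  by rewrite expR_le1 oppr_le0 mulr_ge0 // ltW.
set C := nrm2 (x1 0) (x2 0) / c.
have C0 : 0 <= C by rewrite divr_ge0 ?nrm2_ge0 ?ltW.
apply/cvgrPdist_le => e e0; exists (C / (e * k)); split; first exact: num_real.
move=> t tM; have ek : 0 < e * k by rewrite mulr_gt0.
have t0 : 0 <= t by apply: le_trans _ (ltW tM); exact: divr_ge0 C0 (ltW ek).
rewrite sub0r normrN ger0_norm ?nrm2_ge0 //; apply: le_trans (decay _ _ sol t t0) _.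
rewrite expRN ler_pdivrMr ?expR_gt0 //.
have := ler_wpM2l (ltW e0) (expR_ge1Dx (k * t)).
have : C < t * (e * k) by rewrite -ltr_pdivrMr.
rewrite -/C; nra.
Qed.

Theorem mainTheorem10 (R : realType) (S A : finType)
    (P : S * A -> S -> R) (d : S * A -> R) (gamma : R)
    (HP0 : forall i s', 0 <= P i s')
    (HP1 : forall i, \sum_(s' : S) P i s' = 1)
    (Hd0 : forall i, 0 < d i)
    (Hd1 : \sum_(i : S * A) d i = 1)
    (Hg0 : 0 <= gamma) (Hg1 : gamma < 1) :
  forall beta : R, 0 < beta ->
    is_equilibrium P d gamma beta (fun _ => 0) (fun _ => 0) /\
    (forall z1 z2, is_equilibrium P d gamma beta z1 z2 ->
       z1 = (fun _ => 0) /\ z2 = (fun _ => 0)) /\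
    origin_GAS P d gamma beta.
Proof.
move=> beta beta_gt0; split; first exact: origin_is_equilibrium.
split=> [z1 z2|].
  by apply: equilibrium_eq0; rewrite ?gt_eqF // => i; rewrite gt_eqF.
pose c := (1 + gamma) / 2.
have [c_gt0 gamma_lt_c c_lt1] : [/\ 0 < c, gamma < c & c < 1] by split; rewrite /c; lra.
have [k k_gt0 [k_h1 k_h2]] := decay_rate_exists Hd0 beta_gt0 gamma_lt_c c_lt1.
apply: (origin_GAS_of_exp_decay c_gt0 k_gt0) => x1 x2 sol t t0.
exact: (solution_norm_decay HP0 HP1 Hd0 Hg0 (ltW beta_gt0) c_gt0 (ltW c_lt1) k_h1 k_h2 sol t0).
Qed.
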